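(* Let $G$ be a group with finite symmetric generating set $Z$, let $X,Y$ be finite sets equipped with maps to $G$, let $K\ge0$, and fix a total order on $Y^{\$}$ with induced lexicographic order $\le_{lex}$ on words of equal length over $Y^{\$}$. Suppose $\mathcal{S}\subseteq(Y^{\$})^*$ is a regular language. Then the language $$\mathcal{M}_2=\{(U,V)\in B^*\mid V \text{ is the }\le_{lex}\text{-minimum of }\{V'\in\mathcal{S}\mid (U,V')\in B^* \text{ is a } K\text{-synchronous BCD pair in }(G,d_Z)\}\}$$ is regular.
   Context: Elements of $X$ and $Y$ are regarded as elements of $G$. Let $\$_X\notin X$, $\$_Y\notin Y$ be padding symbols interpreted as the identity of $G$, $X^{\$}=X\cup\{\$_X\}$, $Y^{\$}=Y\cup\{\$_Y\}$, $B=X^{\$}\times Y^{\$}$. A word over $B$ is written $(U,V)$ with $U\in(X^{\$})^*$, $V\in(Y^{\$})^*$ of the same length. For a word $W$, $W_j$ is its prefix of length $j$ ($W_j=W$ if $j>\ell(W)$). $(U,V)\in B^*$ is a $K$-synchronous BCD pair in $(G,d_Z)$ if there exists $g\in G$ with $|g|_Z\le K$ such that $gU=_GVg$ and $|V_j^{-1}gU_j|_Z\le K$ for all $j\ge0$. *)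

From mathcomp Require Import all_boot.
Set Implicit Arguments. Unset Strict Implicit. Unset Printing Implicit Defensive.
Local Open Scope group_scope.

Definition regular (A : finType) (L : seq A -> Prop) : Prop :=
  exists (Q : finType) (q0 : Q) (d : Q -> A -> Q) (F : pred Q),
    forall w : seq A, L w <-> F (foldl d q0 w).

Definition wordlen_le (G : groupType) (Z : seq G) (K : nat) (g : G) : Prop :=
  exists s : seq G, [/\ all (fun z => z \in Z) s, size s <= K & \prod_(z <- s) z = g].

(* Evaluation in G of a padded word; the padding symbol None is the identity. *)
Definition evalw (G : groupType) (T : Type) (i : T -> G) (W : seq (option T)) : G :=
  \prod_(a <- W) oapp i 1 a.

(* (U,V) is a K-synchronous BCD pair in (G, d_Z); W_j = take j W
   (so W_j = W for j > length W). *)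
Definition bcd_pair (G : groupType) (X Y : Type) (iX : X -> G) (iY : Y -> G)
    (Z : seq G) (K : nat) (U : seq (option X)) (V : seq (option Y)) : Prop :=
  exists g : G,
    [/\ wordlen_le Z K g,
        g * evalw iX U = evalw iY V * g
      & forall j : nat,
          wordlen_le Z K ((evalw iY (take j V))^-1 * g * evalw iX (take j U))].

Fixpoint lexle (T : eqType) (le : rel T) (s t : seq T) : bool :=
  match s, t with
  | a :: s', b :: t' => if a == b then lexle le s' t' else le a b
  | [::], _ => true
  | _ :: _, [::] => false
  end.

(* The language M_2 over B = X^$ x Y^$ (a word over B is a seq of pairs). *)
Definition M2 (G : groupType) (X Y : finType) (iX : X -> G) (iY : Y -> G)
    (Z : seq G) (K : nat) (le : rel (option Y)) (S : seq (option Y) -> Prop)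
    (w : seq (option X * option Y)) : Prop :=
  let U := map fst w in
  let V := map snd w in
  [/\ S V, bcd_pair iX iY Z K U V
    & forall V' : seq (option Y), size V' = size U -> S V' ->
        bcd_pair iX iY Z K U V' -> lexle le V V'].

From mathcomp Require Import all_boot.
From Stdlib Require Setoid.
Local Open Scope group_scope.

Set Implicit Arguments. Unset Strict Implicit. Unset Printing Implicit Defensive.

(* Regular languages are closed under Boolean operations, letterwise preimages
   and projections.  A word [w = (U, V)] is a BCD pair iff some [g] in the ball
   of radius [K] starts a run [h |-> y^-1 h x] (one step per letter [(x, y)])
   that stays in this finite ball and returns to [g]: a finite union of
   deterministic automata.  The [lex]-minimal words are then the BCD pairs for
   which no competitor [V'] exists, i.e. the complement of a projection of a
   regular language. *)

Section RegularClosure.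
Variable A : finType.
Implicit Types L : seq A -> Prop.

Lemma eq_regular L L' : (forall w, L w <-> L' w) -> regular L -> regular L'.
Proof.
by move=> eqL [Q [q0 [d [F HF]]]]; exists Q, q0, d, F => w; rewrite -eqL.
Qed.

Lemma regular_dec L : regular L -> forall w, L w \/ ~ L w.
Proof.
by move=> [Q [q0 [d [F HF]]]] w; rewrite HF; case: (F _); [left | right].
Qed.

Lemma regular0 : regular (fun _ : seq A => False).
Proof. by exists unit, tt, (fun _ _ => tt), pred0. Qed.

Lemma regularC L : regular L -> regular (fun w => ~ L w).
Proof.
move=> [Q [q0 [d [F HF]]]]; exists Q, q0, d, (predC F) => w /=; rewrite HF.
by case: (F _); split.
Qed.

Lemma regularI L1 L2 : regular L1 -> regular L2 -> regular (fun w => L1 w /\ L2 w).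
Proof.
move=> [Q1 [q1 [d1 [F1 HF1]]]] [Q2 [q2 [d2 [F2 HF2]]]].
pose d (q : Q1 * Q2) a := (d1 q.1 a, d2 q.2 a).
exists (Q1 * Q2)%type, (q1, q2), d, (fun q => F1 q.1 && F2 q.2) => w.
have foldl_d q : foldl d q w = (foldl d1 q.1 w, foldl d2 q.2 w).
  by elim: w q => [|a w IHw] [q q'] //=; rewrite IHw.
by rewrite foldl_d HF1 HF2 /=; split=> [[-> ->] | /andP].
Qed.

Lemma regularU L1 L2 : regular L1 -> regular L2 -> regular (fun w => L1 w \/ L2 w).
Proof.
move=> reg1 reg2.
apply: eq_regular (regularC (regularI (regularC reg1) (regularC reg2))) => w.
case: (regular_dec reg1 w) => [L1w | nL1w].
  by split=> [_ | _ [/(_ L1w)]]; [left |].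
case: (regular_dec reg2 w) => [L2w | nL2w].
  by split=> [_ | _ [_ /(_ L2w)]]; [right |].
by split=> [nnL | [] //]; case: nnL.
Qed.

Lemma regular_exists_in (I : eqType) (s : seq I) (L : I -> seq A -> Prop) :
  (forall i, regular (L i)) -> regular (fun w => exists2 i, i \in s & L i w).
Proof.
move=> regL; elim: s => [|i s IHs].
  by apply: eq_regular regular0 => w; split=> // -[].
apply: eq_regular (regularU (regL i) IHs) => w; split.
  case=> [Lw | [j sj Lw]]; first by exists i; rewrite ?mem_head.
  by exists j; rewrite // inE sj orbT.
by case=> j; rewrite inE => /orP [/eqP-> | sj] Lw; [left | right; exists j].
Qed.

Lemma regular_orbit_in (T : eqType) (s : seq T) (f : T -> A -> T) (x0 t : T) :
  regular (fun w => (forall j, foldl f x0 (take j w) \in s) /\ foldl f x0 w = t).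
Proof.
(* The state [Some i] stands for the point [nth x0 s i]; [None] records that
   the orbit has left [s]. *)
pose Q := option 'I_(size s).
pose enc x : Q := insub (index x s).
pose dec (k : Q) := omap (fun i : 'I_(size s) => nth x0 s i) k.
pose keep x := if x \in s then Some x else None.
have dec_enc x : dec (enc x) = keep x.
  rewrite /dec /enc /keep; case: insubP => [k | ]; rewrite index_mem.
    by move=> xs /= ->; rewrite xs nth_index.
  by move/negPf->.
pose d (k : Q) a := obind (fun i : 'I_(size s) => enc (f (nth x0 s i) a)) k.
pose fkeep o a := obind (fun x => keep (f x a)) o.
have dec_foldl w k : dec (foldl d k w) = foldl fkeep (dec k) w.
  by elim: w k => [|a w IHw] [k|] //=; rewrite IHw //= dec_enc.
have foldl_fkeep w x y : foldl fkeep (keep x) w = Some y <->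
    (forall j, foldl f x (take j w) \in s) /\ foldl f x w = y.
  have foldl_None w' : foldl fkeep None w' = None by elim: w'.
  elim: w x => [|a w IHw] x /=.
    rewrite /keep; case: ifP => xs; last by split=> // -[/(_ 0)].
    by split=> [[<-] | [_ ->]].
  have -> : fkeep (keep x) a = if x \in s then keep (f x a) else None.
    by rewrite /fkeep /keep; case: ifP.
  case: ifP => xs; last by rewrite foldl_None; split=> // -[/(_ 0)]; rewrite /= xs.
  rewrite IHw; split=> -[sw ->]; split=> // j.
    by case: j => [|j]; [rewrite /= xs | exact: sw].
  exact: sw j.+1.
exists (Q : finType), (enc x0), d, (fun k => dec k == Some t) => w.
by rewrite dec_foldl dec_enc -foldl_fkeep; split=> [-> | /eqP].
Qed.

End RegularClosure.

Lemma regular_preim (A B : finType) (f : B -> A) (L : seq A -> Prop) :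
  regular L -> regular (fun w => L (map f w)).
Proof.
move=> [Q [q0 [d [F HF]]]]; exists Q, q0, (fun q b => d q (f b)), F => w.
by rewrite HF; elim: w (q0) => [|b w IHw] q //=; rewrite IHw.
Qed.

Lemma regular_exists_zip (A B : finType) (L : seq (A * B) -> Prop) :
  regular L -> regular (fun u => exists v, size v = size u /\ L (zip u v)).
Proof.
move=> [Q [q0 [d [F HF]]]].
pose dS (P : {set Q}) a := [set q | [exists q1 in P, [exists b, q == d q1 (a, b)]]].
have foldl_dS u P q : q \in foldl dS P u <->
    exists2 q1, q1 \in P & exists v, size v = size u /\ foldl d q1 (zip u v) = q.
  elim: u P => [|a u IHu] P /=.
    by split=> [qP | [q1 q1P [[|b v] [//= _ <-]]]] //; exists q => //; exists [::].
  rewrite IHu; split.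
    case=> q2; rewrite inE => /exists_inP [q1 q1P /existsP [b /eqP ->]].
    by case=> v [sv <-]; exists q1 => //; exists (b :: v); rewrite /= sv.
  case=> q1 q1P [[|b v] [//= [sv] <-]]; exists (d q1 (a, b)); last by exists v.
  by rewrite inE; apply/exists_inP; exists q1 => //; apply/existsP; exists b.
exists {set Q}, [set q0], dS, (fun P : {set Q} => [exists q in P, F q]) => u; split.
  case=> v [sv Lv]; apply/exists_inP; exists (foldl d q0 (zip u v)).
    by apply/foldl_dS; exists q0; rewrite ?inE //; exists v.
  by rewrite -HF.
case/exists_inP => q /foldl_dS [q1]; rewrite inE => /eqP -> [v [sv <-]] Fq.
by exists v; split => //; apply/HF.
Qed.

Lemma regular_lexle (T : finType) (le : rel T) :
  regular (fun w : seq (T * T) => lexle le (map fst w) (map snd w)).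
Proof.
pose d (q : option bool) (a : T * T) :=
  if q is Some _ then q else if a.1 == a.2 then None else Some (le a.1 a.2).
exists (option bool : finType), None, d, (fun q => if q is Some b then b else true).
have foldl_Some b w : foldl d (Some b) w = Some b by elim: w.
by elim=> [|[a b] w IHw] //=; case: eqP; rewrite ?foldl_Some.
Qed.

Lemma regular_lexmin (A B : finType) (le : rel B) (L : seq (A * B) -> Prop) :
  regular L ->
  regular (fun w => L w /\ forall v, size v = size w ->
                    L (zip (map fst w) v) -> lexle le (map snd w) v).
Proof.
move=> regL.
pose f1 (p : A * B * B) := (p.1.1, p.2); pose f2 (p : A * B * B) := (p.1.2, p.2).
pose T z := L (map f1 z) /\ ~ lexle le (map fst (map f2 z)) (map snd (map f2 z)).
have regT : regular T.
  apply: regularI (regular_preim f1 regL) _.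
  exact: regularC (regular_preim f2 (regular_lexle le)).
apply: eq_regular (regularI regL (regularC (regular_exists_zip regT))) => w.
have zipE v : size v = size w -> [/\ map f1 (zip w v) = zip (map fst w) v,
    map fst (map f2 (zip w v)) = map snd w & map snd (map f2 (zip w v)) = v].
  by elim: w v => [|[a b] w IHw] [|c v] //= [/IHw [-> -> ->]].
split=> -[Lw minw]; split=> //.
  move=> v sv Lv; case lex_wv: lexle => //; case: minw; exists v; split=> //.
  by rewrite /T; case: (zipE v sv) => -> -> ->; rewrite lex_wv.
case=> v [sv]; rewrite /T; case: (zipE v sv) => -> -> -> [Lv]; apply.
exact: minw.
Qed.

Section BCDPairs.
Variables (G : groupType) (Z : seq G) (X Y : Type) (iX : X -> G) (iY : Y -> G).

Fixpoint ball (k : nat) : seq G :=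
  if k is k'.+1 then 1 :: [seq z * g | z <- Z, g <- ball k'] else [:: 1].

Lemma wordlen_leP k g : wordlen_le Z k g <-> g \in ball k.
Proof.
elim: k g => [|k IHk] g /=.
  split=> [[[|z s] [_ //= _ <-]] | ]; first by rewrite big_nil inE.
  by rewrite inE => /eqP ->; exists [::]; rewrite big_nil.
rewrite inE; split.
  case=> -[|z s] [/=]; first by rewrite big_nil => _ _ <-; rewrite eqxx.
  move=> /andP [zZ sZ] ss <-.
  apply/orP; right; rewrite big_cons; apply/allpairsP; exists (z, \prod_(y <- s) y).
  by split=> //; apply/IHk; exists s.
case/orP=> [/eqP -> | /allpairsP [[z h] [/= zZ /IHk [s [sZ ss <-]] ->]]].
  by exists [::]; rewrite big_nil.
by exists (z :: s); rewrite /= zZ sZ ltnS ss big_cons.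
Qed.

Definition conj_step (h : G) (a : option X * option Y) : G :=
  (oapp iY 1 a.2)^-1 * h * oapp iX 1 a.1.

Lemma foldl_conj_step g w :
  foldl conj_step g w = (evalw iY (map snd w))^-1 * g * evalw iX (map fst w).
Proof.
elim: w g => [|a w IHw] g /=; first by rewrite /evalw !big_nil invg1 mul1g mulg1.
by rewrite IHw /evalw !big_cons invgM !mulgA.
Qed.

Lemma bcd_pair_conj_step K w :
  bcd_pair iX iY Z K (map fst w) (map snd w) <->
  exists2 g, g \in ball K &
    (forall j, foldl conj_step g (take j w) \in ball K) /\ foldl conj_step g w = g.
Proof.
have conjE g : (evalw iY (map snd w))^-1 * g * evalw iX (map fst w) = g <->
               g * evalw iX (map fst w) = evalw iY (map snd w) * g.
  by rewrite -mulgA; split=> [eq_g | ->]; rewrite ?mulKg // -{2}eq_g mulVKg.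
split.
  case=> g [/wordlen_leP gK /conjE eq_g prefK]; exists g => //.
  rewrite foldl_conj_step; split=> // j; apply/wordlen_leP.
  by rewrite foldl_conj_step !map_take.
case=> g /wordlen_leP gK [prefK]; rewrite foldl_conj_step => /conjE eq_g.
exists g; split=> // j; apply/wordlen_leP.
by move: (prefK j); rewrite foldl_conj_step !map_take.
Qed.

End BCDPairs.

Lemma regular_bcd_pair (G : groupType) (Z : seq G) (K : nat) (X Y : finType)
    (iX : X -> G) (iY : Y -> G) :
  regular (fun w => bcd_pair iX iY Z K (map fst w) (map snd w)).
Proof.
apply: eq_regular (regular_exists_in (ball Z K)
  (fun g => regular_orbit_in (ball Z K) (conj_step iX iY) g g)) => w.
exact: iff_sym (bcd_pair_conj_step _ _ _ _ _).
Qed.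

Theorem lemma5p13 (G : groupType) (Z : seq G)
    (Zsym : forall z, z \in Z -> z^-1 \in Z)
    (Zgen : forall g : G, exists s : seq G,
        all (fun z => z \in Z) s /\ \prod_(z <- s) z = g)
    (X Y : finType) (iX : X -> G) (iY : Y -> G) (K : nat)
    (le : rel (option Y))
    (le_total : total le) (le_trans : transitive le) (le_anti : antisymmetric le)
    (S : seq (option Y) -> Prop) (S_reg : regular S) :
  regular (M2 iX iY Z K le S).
Proof.
have reg_S_bcd := regularI (regular_preim snd S_reg) (regular_bcd_pair Z K iX iY).
apply: eq_regular (regular_lexmin le reg_S_bcd) => w.
have zipK (v : seq (option Y)) : size v = size w ->
    map fst (zip (map fst w) v) = map fst w /\ map snd (zip (map fst w) v) = v.
  by move=> sv; split; [apply: unzip1_zip | apply: unzip2_zip]; rewrite size_map sv.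
rewrite /M2 size_map; split=> [[[Sw bcdw] minw] | [Sw bcdw minw]].
  by split=> // v sv Sv bcdv; apply: minw => //; case: (zipK v sv) => -> ->.
by split=> // v sv; case: (zipK v sv) => -> -> [Sv bcdv]; apply: minw.
Qed.
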